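(* Let $M$ be a pointed metric space and let $\mathcal U$ be a countably incomplete ultrafilter on a set $I$. Let $T\colon(\mathrm{Lip}_0(M))_{\mathcal U}\rightarrow \mathrm{Lip}_0(M_{\mathcal U})$ be the operator given by $T((f_i)_{\mathcal U})((x_i)_{\mathcal U})=\lim_{\mathcal U,i}f_i(x_i)$. The following are equivalent: (i) $M$ is uniformly discrete and bounded; (ii) $T$ is injective; (iii) $T$ is an isometry.
   Context: An ultrafilter $\mathcal U$ on $I$ is countably incomplete if there is a sequence $(I_n)_{n\in\mathbb N}$ in $\mathcal U$ with $I_{n+1}\subset I_n$ and $\bigcap_n I_n=\emptyset$. Ultrapower of a metric space: for a metric space $(M,d)$ with base point $0$, let $\ell_\infty(M)=\{(x_i)_{i\in I}\in M^I:\sup_i d(x_i,0)<\infty\}$ with pseudometric $d((x_i),(y_i))=\lim_{\mathcal U,i}d(x_i,y_i)$; $M_{\mathcal U}$ is the metric quotient identifying points at distance $0$, classes written $(x_i)_{\mathcal U}$, pointed by $(0)_{\mathcal U}$. For a Banach space $X$, $X_{\mathcal U}$ is the usual Banach ultrapower (base point $0$), with norm $\|(x_i)_{\mathcal U}\|=\lim_{\mathcal U}\|x_i\|$. $\mathrm{Lip}_0(M)$ is the Banach space of real-valued Lipschitz functions on $M$ vanishing at $0$ with norm the Lipschitz constant. $M$ is uniformly discrete if $\inf\{d(x,y):x\neq y\}>0$. *)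

From mathcomp Require Import all_boot all_order all_algebra.
From mathcomp Require Import classical_sets boolp reals.
Set Implicit Arguments. Unset Strict Implicit. Unset Printing Implicit Defensive.
Import Order.TTheory GRing.Theory Num.Theory.
Local Open Scope classical_set_scope.
Local Open Scope ring_scope.

Section Defs.
Variable R : realType.

Definition is_metric (M : Type) (d : M -> M -> R) : Prop :=
  (forall x y, 0 <= d x y) /\
  (forall x y, d x y = 0 <-> x = y) /\
  (forall x y, d x y = d y x) /\
  (forall x y z, d x z <= d x y + d y z).

Definition is_ultrafilter (I : Type) (U : set (set I)) : Prop :=
  U setT /\ ~ U set0 /\
  (forall A B, U A -> A `<=` B -> U B) /\
  (forall A B, U A -> U B -> U (A `&` B)) /\
  (forall A, U A \/ U (~` A)).

Definition countably_incomplete (I : Type) (U : set (set I)) : Prop :=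
  exists In : nat -> set I,
    (forall n, U (In n)) /\ (forall n, In n.+1 `<=` In n) /\
    \bigcap_n In n = set0.

Definition is_ulim (I : Type) (U : set (set I)) (a : I -> R) (l : R) : Prop :=
  forall eps : R, 0 < eps -> U [set i | `|a i - l| < eps].

(* lim_{U,i} a_i (exists and is unique for bounded a and an ultrafilter U) *)
Definition ulim (I : Type) (U : set (set I)) (a : I -> R) : R :=
  xget 0 [set l | is_ulim U a l].

Definition lipc (M : Type) (d : M -> M -> R) (f : M -> R) : R :=
  sup [set r | exists x y, x <> y /\ r = `|f x - f y| / d x y].

Definition is_Lip0 (M : Type) (d : M -> M -> R) (z : M) (f : M -> R) : Prop :=
  f z = 0 /\ exists L : R, forall x y, `|f x - f y| <= L * d x y.

Definition bdd_family (I M : Type) (d : M -> M -> R) (z : M) (x : I -> M) : Prop :=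
  exists C : R, forall i, d (x i) z <= C.

Definition bdd_Lip0_family (I M : Type) (d : M -> M -> R) (z : M)
    (f : I -> M -> R) : Prop :=
  (forall i, is_Lip0 d z (f i)) /\ exists C : R, forall i, lipc d (f i) <= C.

(* the (pseudo)metric of M_U on representatives *)
Definition dU (I M : Type) (U : set (set I)) (d : M -> M -> R) (x y : I -> M) : R :=
  ulim U (fun i => d (x i) (y i)).

(* norm in (Lip_0(M))_U of the class of (f_i) *)
Definition ultra_norm (I M : Type) (U : set (set I)) (d : M -> M -> R)
    (f : I -> M -> R) : R :=
  ulim U (fun i => lipc d (f i)).

Definition Top (I M : Type) (U : set (set I)) (f : I -> M -> R) (x : I -> M) : R :=
  ulim U (fun i => f i (x i)).

(* Lipschitz constant of a function on M_U, given on representatives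
   (F must be constant on classes); sup over pairs of distinct classes *)
Definition lipc_U (I M : Type) (U : set (set I)) (d : M -> M -> R) (z : M)
    (F : (I -> M) -> R) : R :=
  sup [set r | exists x y, bdd_family d z x /\ bdd_family d z y /\
                 dU U d x y <> 0 /\ r = `|F x - F y| / dU U d x y].

Definition uniformly_discrete (M : Type) (d : M -> M -> R) : Prop :=
  exists delta : R, 0 < delta /\ forall x y, x <> y -> delta <= d x y.

Definition bounded_space (M : Type) (d : M -> M -> R) (z : M) : Prop :=
  exists C : R, forall x, d x z <= C.

End Defs.

From mathcomp Require Import all_boot all_order all_algebra.
From mathcomp Require Import classical_sets boolp reals.
From mathcomp Require Import ring lra.
Import Order.TTheory GRing.Theory Num.Theory.
Local Open Scope classical_set_scope.
Local Open Scope ring_scope.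

(* (i) => (iii): for h = f - g one always has |T h x - T h y| <= |(h_i)_U| d_U(x, y).
   Conversely pick x_i <> y_i almost realising Lip(h_i): boundedness makes (x_i)
   and (y_i) points of M_U, and uniform discreteness keeps d_U(x, y) >= delta > 0,
   so the almost optimal ratios pass to the U-limit.  (iii) => (ii) is immediate.
   (ii) => (i): countable incompleteness yields a rank n : I -> nat tending to
   infinity along U.  If M is not uniformly discrete, take a_k <> b_k with
   eps_k = d(a_k, b_k) < 1/(k+1); the functions p |-> min(d(p, a_(n i)), eps_(n i))
   have Lipschitz constant 1 but sup norm at most eps_(n i), so T kills a class of
   norm >= 1.  If M is unbounded, the functions p |-> max(0, d(p, z) - n i) have
   Lipschitz constant >= 1/2 but vanish eventually on every bounded family. *)

Set Implicit Arguments.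
Unset Strict Implicit.
Unset Printing Implicit Defensive.

Section UltraLimit.
Variables (R : realType) (I : Type) (U : set (set I)).
Hypothesis HU : is_ultrafilter U.

Lemma ultraT : U setT.
Proof. by case: HU. Qed.

Lemma ultraS (A B : set I) : A `<=` B -> U A -> U B.
Proof. by case: HU => _ [_ [UI _]] AB UA; exact: UI UA AB. Qed.

Lemma ultraI (A B : set I) : U A -> U B -> U (A `&` B).
Proof. by case: HU => _ [_ [_ [UI _]]]; exact: UI. Qed.

Lemma ultra_nonempty (A : set I) : U A -> A !=set0.
Proof.
case: HU => _ [U0 _] UA; apply: contrapT => /set0P/negP/negPn/eqP A0.
by apply: U0; rewrite -A0.
Qed.

Lemma is_ulim_unique (a : I -> R) l1 l2 :
  is_ulim U a l1 -> is_ulim U a l2 -> l1 = l2.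
Proof.
move=> a1 a2; apply: contrapT => /eqP ne.
have e2 : 0 < `|l1 - l2| / 2 by rewrite divr_gt0 // normr_gt0 subr_eq0.
have [i [/= h1 h2]] := ultra_nonempty (ultraI (a1 _ e2) (a2 _ e2)).
have := ler_distD (a i) l1 l2; rewrite (distrC l1 (a i)); lra.
Qed.

Lemma is_ulim_bounded (a : I -> R) C :
  (forall i, `|a i| <= C) -> exists l, is_ulim U a l.
Proof.
move=> aC.
pose S := [set t : R | U [set i | t <= a i]].
have SC : S (- C).
  by apply: ultraS ultraT => i _ /=; have := aC i; rewrite ler_norml => /andP[].
have ubS : ubound S C.
  move=> t /ultra_nonempty [i /= ti]; apply: le_trans ti _.
  by have := aC i; rewrite ler_norml => /andP[].
have supS : has_sup S by split; [exists (- C) | exists C].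
exists (sup S) => e e0; have [t St lt_t] := sup_adherent e0 supS.
have above : U [set i | sup S - e < a i].
  by apply: ultraS St => i /= ti; exact: lt_le_trans lt_t ti.
have below : U [set i | a i < sup S + e].
  case: HU => _ [_ [_ [_ UC]]]; have [//|Ucompl] := UC [set i | a i < sup S + e].
  have : S (sup S + e) by apply: ultraS Ucompl => i /= /negP; rewrite -leNgt.
  by move=> /(ub_le_sup (proj2 supS)); lra.
apply: ultraS (ultraI above below) => i [/= h1 h2]; rewrite ltr_norml; apply/andP; lra.
Qed.

Lemma ulimE (a : I -> R) l : is_ulim U a l -> ulim U a = l.
Proof. by move=> al; apply: (xget_unique _ al) => l' /is_ulim_unique; apply. Qed.

Lemma ulimP (a : I -> R) C : (forall i, `|a i| <= C) -> is_ulim U a (ulim U a).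
Proof. by move=> /is_ulim_bounded [l al]; rewrite (ulimE al). Qed.

Lemma is_ulim_cst (c : R) : is_ulim U (fun=> c) c.
Proof. by move=> e e0; apply: ultraS ultraT => i _ /=; rewrite subrr normr0. Qed.

Lemma is_ulimD (a b : I -> R) l m :
  is_ulim U a l -> is_ulim U b m -> is_ulim U (fun i => a i + b i) (l + m).
Proof.
move=> al bm e e0; have e2 : 0 < e / 2 by rewrite divr_gt0.
apply: ultraS (ultraI (al _ e2) (bm _ e2)) => i [/= h1 h2].
rewrite opprD addrACA; apply: le_lt_trans (ler_normD _ _) _; lra.
Qed.

Lemma is_ulimN (a : I -> R) l : is_ulim U a l -> is_ulim U (fun i => - a i) (- l).
Proof. by move=> al e /al; apply: ultraS => i /=; rewrite -opprD normrN. Qed.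

Lemma is_ulimB (a b : I -> R) l m :
  is_ulim U a l -> is_ulim U b m -> is_ulim U (fun i => a i - b i) (l - m).
Proof. by move=> al /is_ulimN; exact: is_ulimD. Qed.

Lemma is_ulim_norm (a : I -> R) l : is_ulim U a l -> is_ulim U (fun i => `|a i|) `|l|.
Proof.
by move=> al e /al; apply: ultraS => i /=; exact: le_lt_trans (ler_dist_dist _ _).
Qed.

Lemma is_ulim_le (a b : I -> R) l m :
  (forall i, a i <= b i) -> is_ulim U a l -> is_ulim U b m -> l <= m.
Proof.
move=> ab al bm; rewrite leNgt; apply/negP => ml.
have e2 : 0 < (l - m) / 2 by rewrite divr_gt0 // subr_gt0.
have [i [/= h1 h2]] := ultra_nonempty (ultraI (al _ e2) (bm _ e2)).
move: h1 h2; rewrite !ltr_norml => /andP[h1 h1'] /andP[h2 h2'].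
have := ab i; lra.
Qed.

Lemma is_ulimM (a b : I -> R) l m (A : R) : (forall i, `|a i| <= A) ->
  is_ulim U a l -> is_ulim U b m -> is_ulim U (fun i => a i * b i) (l * m).
Proof.
move=> aA al bm e e0.
have [i0 _] := ultra_nonempty ultraT.
have A0 : 0 <= A := le_trans (normr_ge0 _) (aA i0).
pose K := A + `|m| + 1; have K0 : 0 < K by rewrite /K; have := normr_ge0 m; lra.
have eK : 0 < e / K by rewrite divr_gt0.
apply: ultraS (ultraI (al _ eK) (bm _ eK)) => i [/= h1 h2].
have -> : a i * b i - l * m = a i * (b i - m) + m * (a i - l) by ring.
apply: le_lt_trans (ler_normD _ _) _; rewrite !normrM.
have := ler_pM (normr_ge0 _) (normr_ge0 _) (aA i) (ltW h2).
have := ler_pM (normr_ge0 _) (normr_ge0 _) (lexx `|m|) (ltW h1).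
have : K * (e / K) = e by rewrite mulrC divfK // gt_eqF.
have : K * (e / K) = A * (e / K) + `|m| * (e / K) + e / K by rewrite /K; ring.
lra.
Qed.

(* Choose n i with i outside I_(n i); as the I_N decrease, i in I_N forces N < n i. *)
Lemma countably_incomplete_rank : countably_incomplete U ->
  exists n : I -> nat, forall N, U [set i | (N <= n i)%N].
Proof.
move=> [In [UIn [In_decr In_cap]]].
have /choice[n nP] : forall i, exists m, ~ In m i.
  move=> i; apply: contrapT => /forallNP In_i.
  suff : (\bigcap_m In m) i by rewrite In_cap.
  by move=> m _; apply: contrapT; exact: In_i.
have In_anti m k : (m <= k)%N -> In k `<=` In m.
  elim: k => [|k IHk]; first by rewrite leqn0 => /eqP ->.
  rewrite leq_eqVlt => /orP[/eqP -> //|]; rewrite ltnS => mk i /In_decr.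
  exact: IHk.
exists n => N; apply: (ultraS _ (UIn N)) => i INi; rewrite /= leqNgt; apply/negP => nN.
exact/(nP i)/(In_anti _ _ (ltnW nN)).
Qed.

Lemma is_ulim0_rank (n : I -> nat) (a : I -> R) :
  (forall N, U [set i | (N <= n i)%N]) ->
  (forall e, 0 < e -> exists N, forall i, (N <= n i)%N -> `|a i| < e) ->
  is_ulim U a 0.
Proof.
move=> nU aN e /aN [N aNe]; apply: (ultraS _ (nU N)) => i /= /aNe.
by rewrite subr0.
Qed.

End UltraLimit.

Lemma ler_dist_min (R : realDomainType) (x y c : R) :
  `|Num.min x c - Num.min y c| <= `|x - y|.
Proof.
have := ler_norm (x - y); have := ler_norm (y - x); rewrite (distrC y) => h1 h2.
by rewrite ler_norml; case: (lerP x c); case: (lerP y c) => ? ?; apply/andP; lra.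
Qed.

Lemma sup_ge0 (R : realType) (E : set R) : (forall r, E r -> 0 <= r) -> 0 <= sup E.
Proof.
move=> E_ge0; have [[[r Er] ubE]|/sup_out->//] := pselect (has_sup E).
exact: le_trans (E_ge0 _ Er) (ub_le_sup ubE Er).
Qed.

(* Unlike ge_sup, no nonemptiness is needed: sup set0 = 0 <= L. *)
Lemma sup_le_ge0 (R : realType) (E : set R) L :
  0 <= L -> ubound E L -> sup E <= L.
Proof.
move=> L0 EL; have [E0|/set0P/negP/negPn/eqP->] := pselect (E !=set0).
  exact: ge_sup.
by rewrite sup0.
Qed.

Section Lipschitz.
Variables (R : realType) (M : Type) (d : M -> M -> R).
Hypothesis Hd : is_metric d.
Variable z : M.

Lemma metric_ge0 x y : 0 <= d x y. Proof. by case: Hd. Qed.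
Lemma metricxx x : d x x = 0. Proof. by case: Hd => _ [/(_ x x) [_ ->]]. Qed.
Lemma metricC x y : d x y = d y x. Proof. by case: Hd => _ [_ []]. Qed.
Lemma metric_triangle x y w : d x w <= d x y + d y w.
Proof. by case: Hd => _ [_ [_]]. Qed.

Lemma metric_gt0 x y : x <> y -> 0 < d x y.
Proof.
move=> xy; rewrite lt_def metric_ge0 andbT; apply/eqP => /(proj1 (proj2 Hd) x y).
exact: xy.
Qed.

Lemma ler_dist_metric x y w : `|d x w - d y w| <= d x y.
Proof.
have := metric_triangle x y w; have := metric_triangle y x w.
by rewrite (metricC y x) ler_norml => ? ?; apply/andP; lra.
Qed.

Definition lipschitz_with (f : M -> R) L := forall x y, `|f x - f y| <= L * d x y.

Lemma lipschitz_withB (f g : M -> R) L L' :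
  lipschitz_with f L -> lipschitz_with g L' ->
  lipschitz_with (fun p => f p - g p) (L + L').
Proof.
move=> fL gL' x y; rewrite mulrDl.
have -> : f x - g x - (f y - g y) = (f x - f y) - (g x - g y) by ring.
exact: le_trans (ler_normB _ _) (lerD (fL x y) (gL' x y)).
Qed.

Lemma lipschitz_dist a : lipschitz_with (d^~ a) 1.
Proof. by move=> x y; rewrite mul1r; exact: ler_dist_metric x y a. Qed.

Lemma lipc_ge0 f : 0 <= lipc d f.
Proof. by apply: sup_ge0 => r [x [y [_ ->]]]; rewrite divr_ge0 ?metric_ge0. Qed.

Lemma lipc_le f L : 0 <= L -> lipschitz_with f L -> lipc d f <= L.
Proof.
move=> L0 fL; apply: sup_le_ge0 => // r [x [y [xy ->]]].
by rewrite ler_pdivrMr ?metric_gt0.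
Qed.

Lemma ratio_le_lipc f L x y : lipschitz_with f L -> x <> y ->
  `|f x - f y| / d x y <= lipc d f.
Proof.
move=> fL xy; apply: ub_le_sup; last by exists x, y.
by exists L => r [x' [y' [x'y' ->]]]; rewrite ler_pdivrMr ?metric_gt0.
Qed.

Lemma lipschitz_lipc f L : lipschitz_with f L -> lipschitz_with f (lipc d f).
Proof.
move=> fL x y; have [->|xy] := pselect (x = y).
  by rewrite subrr normr0 metricxx mulr0.
by rewrite -ler_pdivrMr ?metric_gt0 //; exact: ratio_le_lipc fL xy.
Qed.

Lemma lipc_approx f L e : lipschitz_with f L -> 0 < e -> (exists x y : M, x <> y) ->
  exists x y, x <> y /\ (lipc d f - e) * d x y < `|f x - f y|.
Proof.
move=> fL e0 [a [b ab]].
have supf : has_sup [set r | exists x y, x <> y /\ r = `|f x - f y| / d x y].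
  split; first by exists (`|f a - f b| / d a b), a, b.
  by exists L => r [x [y [xy ->]]]; rewrite ler_pdivrMr ?metric_gt0.
have [_ [x [y [xy ->]]] lt_e] := sup_adherent e0 supf.
by exists x, y; split => //; rewrite -ltr_pdivlMr ?metric_gt0.
Qed.

Lemma lipc_subsingleton f : ~ (exists x y : M, x <> y) -> lipc d f = 0.
Proof.
move=> M1; apply/le_anti; rewrite lipc_ge0 andbT; apply: (lipc_le (lexx 0)) => x y.
have [->|xy] := pselect (x = y); first by rewrite subrr normr0 mul0r.
by exfalso; apply: M1; exists x, y.
Qed.

Definition trunc_dist a (c : R) p := Num.min (d p a) c - Num.min (d z a) c.

Lemma trunc_dist_lipschitz a (c : R) : lipschitz_with (trunc_dist a c) 1.
Proof.
move=> x y; rewrite /trunc_dist opprB addrA subrK.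
exact: le_trans (ler_dist_min _ _ _) (lipschitz_dist a x y).
Qed.

Lemma trunc_distz a (c : R) : trunc_dist a c z = 0.
Proof. exact: subrr. Qed.

Lemma trunc_dist_bound a (c : R) p : 0 <= c -> `|trunc_dist a c p| <= c.
Proof.
move=> c0; have min_in q : 0 <= Num.min (d q a) c <= c.
  by rewrite ge_min lexx orbT le_min c0 metric_ge0.
have /andP[? ?] := min_in p; have /andP[? ?] := min_in z.
by rewrite ler_norml; apply/andP; rewrite /trunc_dist; lra.
Qed.

Lemma bdd_Lip0_family_uniform (I : Type) (f : I -> M -> R) (L : R) : 0 <= L ->
  (forall i, f i z = 0) -> (forall i, lipschitz_with (f i) L) ->
  bdd_Lip0_family d z f.
Proof.
move=> L0 fz fL; split=> [i|]; first by split; [exact: fz | exists L; exact: fL].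
by exists L => i; apply: (lipc_le L0 (fL i)).
Qed.

Section Ultrapower.
Variables (I : Type) (U : set (set I)).
Hypothesis HU : is_ultrafilter U.

Lemma bdd_Lip0_lipschitz (f : I -> M -> R) i :
  bdd_Lip0_family d z f -> lipschitz_with (f i) (lipc d (f i)).
Proof. by case=> /(_ i) [_ [L fL]] _; exact: (lipschitz_lipc fL). Qed.

Lemma bdd_Lip0_familyB (f g : I -> M -> R) :
  bdd_Lip0_family d z f -> bdd_Lip0_family d z g ->
  bdd_Lip0_family d z (fun i p => f i p - g i p).
Proof.
move=> Lf Lg; have [_ [Cf fCf]] := Lf; have [_ [Cg gCg]] := Lg.
have fgL i := lipschitz_withB (bdd_Lip0_lipschitz i Lf) (bdd_Lip0_lipschitz i Lg).
split=> [i|].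
  split; last by exists (lipc d (f i) + lipc d (g i)); exact: fgL.
  by have [[fz _] [gz _]] := (proj1 Lf i, proj1 Lg i); rewrite fz gz subrr.
exists (Cf + Cg) => i; apply: le_trans (lipc_le _ (fgL i)) (lerD (fCf i) (gCg i)).
by rewrite addr_ge0 ?lipc_ge0.
Qed.

Lemma ultra_norm_ulim (f : I -> M -> R) :
  bdd_Lip0_family d z f -> is_ulim U (fun i => lipc d (f i)) (ultra_norm U d f).
Proof.
case=> _ [C fC]; apply: (ulimP HU (C := C)) => i.
by rewrite ger0_norm ?lipc_ge0.
Qed.

Lemma ultra_norm_ge (f : I -> M -> R) c : bdd_Lip0_family d z f ->
  (forall i, c <= lipc d (f i)) -> c <= ultra_norm U d f.
Proof.
by move=> /ultra_norm_ulim fU cf; exact: (is_ulim_le HU cf (is_ulim_cst HU c) fU).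
Qed.

Lemma Top_ulim (f : I -> M -> R) x : bdd_Lip0_family d z f -> bdd_family d z x ->
  is_ulim U (fun i => f i (x i)) (Top U f x).
Proof.
move=> Lf [Cx xC]; have [_ [Cf fC]] := Lf; apply: (ulimP HU (C := Cf * Cx)) => i.
have := bdd_Lip0_lipschitz i Lf (x i) z; rewrite (proj1 (proj1 Lf i)) subr0 => fx.
by apply: le_trans fx _; rewrite ler_pM ?lipc_ge0 ?metric_ge0.
Qed.

Lemma dU_ulim x y : bdd_family d z x -> bdd_family d z y ->
  is_ulim U (fun i => d (x i) (y i)) (dU U d x y).
Proof.
move=> [Cx xC] [Cy yC]; apply: (ulimP HU (C := Cx + Cy)) => i.
rewrite ger0_norm ?metric_ge0 //; apply: le_trans (metric_triangle _ z _) _.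
by rewrite (metricC z); exact: lerD.
Qed.

Lemma dU_ge0 x y : bdd_family d z x -> bdd_family d z y -> 0 <= dU U d x y.
Proof.
move=> bx by_.
exact: (is_ulim_le HU (fun i => metric_ge0 _ _) (is_ulim_cst HU 0) (dU_ulim bx by_)).
Qed.

Section UltraLimitOperator.
Variables (h : I -> M -> R) (F : (I -> M) -> R).
Hypothesis Lh : bdd_Lip0_family d z h.
Hypothesis hF : forall x, bdd_family d z x -> is_ulim U (fun i => h i (x i)) (F x).

Let ratios := [set r | exists x y, bdd_family d z x /\ bdd_family d z y /\
  dU U d x y <> 0 /\ r = `|F x - F y| / dU U d x y].

Lemma ultra_norm_lipschitz x y : bdd_family d z x -> bdd_family d z y ->
  `|F x - F y| <= ultra_norm U d h * dU U d x y.
Proof.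
move=> bx by_; have [_ [C hC]] := Lh.
have lipc_bound i : `|lipc d (h i)| <= C by rewrite ger0_norm ?lipc_ge0.
apply: (is_ulim_le HU (fun i => bdd_Lip0_lipschitz i Lh (x i) (y i))).
  exact: (is_ulim_norm HU (is_ulimB HU (hF bx) (hF by_))).
exact: (is_ulimM HU lipc_bound (ultra_norm_ulim Lh) (dU_ulim bx by_)).
Qed.

Lemma ratios_ubound : ubound ratios (ultra_norm U d h).
Proof.
move=> _ [x [y [bx [by_ [xy0 ->]]]]].
have xy_gt0 : 0 < dU U d x y by rewrite lt_def (dU_ge0 bx by_) andbT; apply/eqP.
by rewrite ler_pdivrMr //; exact: ultra_norm_lipschitz.
Qed.

Lemma lipc_U_le : lipc_U U d z F <= ultra_norm U d h.
Proof.
apply: sup_le_ge0 ratios_ubound.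
exact: (ultra_norm_ge Lh (fun i => lipc_ge0 (h i))).
Qed.

Lemma ratio_le_lipc_U x y : bdd_family d z x -> bdd_family d z y ->
  0 < dU U d x y -> `|F x - F y| / dU U d x y <= lipc_U U d z F.
Proof.
move=> bx by_ xy_gt0; apply: (ub_le_sup (ex_intro _ _ ratios_ubound)).
by exists x, y; do 2 split => //; split=> //; exact/eqP/lt0r_neq0.
Qed.

Lemma ultra_norm_le_lipc_U : uniformly_discrete d -> bounded_space d z ->
  ultra_norm U d h <= lipc_U U d z F.
Proof.
move=> [del [del0 delP]] [C zC].
have [M2|M1] := pselect (exists a b : M, a <> b); last first.
  have -> : ultra_norm U d h = 0.
    rewrite /ultra_norm; under eq_fun do rewrite (lipc_subsingleton _ M1).
    exact: (ulimE HU (is_ulim_cst HU 0)).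
  by apply: sup_ge0 => _ [x [y [bx [by_ [_ ->]]]]]; rewrite divr_ge0 ?(dU_ge0 bx by_).
apply/ler_addgt0Pr => e e0.
have /choice[xy xyP] i : exists xy : M * M, xy.1 <> xy.2 /\
    (lipc d (h i) - e) * d xy.1 xy.2 < `|h i xy.1 - h i xy.2|.
  have [x [y xyP]] := lipc_approx (bdd_Lip0_lipschitz i Lh) e0 M2.
  by exists (x, y).
pose x i := (xy i).1; pose y i := (xy i).2.
have bx : bdd_family d z x by exists C.
have by_ : bdd_family d z y by exists C.
have del_le : del <= dU U d x y.
  apply: (is_ulim_le HU _ (is_ulim_cst HU del) (dU_ulim bx by_)) => i.
  exact: delP (proj1 (xyP i)).
have xy_gt0 : 0 < dU U d x y := lt_le_trans del0 del_le.
have [_ [Ch hC]] := Lh.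
have lipcB_bound i : `|lipc d (h i) - e| <= Ch + e.
  have := hC i; have := lipc_ge0 (h i).
  by rewrite ler_norml => ? ?; apply/andP; lra.
have : (ultra_norm U d h - e) * dU U d x y <= `|F x - F y|.
  apply: (is_ulim_le HU (fun i => ltW (proj2 (xyP i)))).
    have hU := is_ulimB HU (ultra_norm_ulim Lh) (is_ulim_cst HU e).
    exact: (is_ulimM HU lipcB_bound hU (dU_ulim bx by_)).
  exact: (is_ulim_norm HU (is_ulimB HU (hF bx) (hF by_))).
rewrite -ler_pdivlMr // => /le_trans /(_ (ratio_le_lipc_U bx by_ xy_gt0)).
by rewrite lerBlDr.
Qed.

End UltraLimitOperator.

Definition Top_injective := forall f g : I -> M -> R,
  bdd_Lip0_family d z f -> bdd_Lip0_family d z g ->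
  (forall x, bdd_family d z x -> Top U f x = Top U g x) ->
  ultra_norm U d (fun i p => f i p - g i p) = 0.

Definition Top_isometric := forall f g : I -> M -> R,
  bdd_Lip0_family d z f -> bdd_Lip0_family d z g ->
  lipc_U U d z (fun x => Top U f x - Top U g x) =
  ultra_norm U d (fun i p => f i p - g i p).

Lemma uniformly_discrete_bounded_isometric :
  uniformly_discrete d -> bounded_space d z -> Top_isometric.
Proof.
move=> ud bd f g Lf Lg.
have Lfg := bdd_Lip0_familyB Lf Lg.
have Tfg x (bx : bdd_family d z x) := is_ulimB HU (Top_ulim Lf bx) (Top_ulim Lg bx).
by apply/le_anti; rewrite (lipc_U_le Lfg Tfg) (ultra_norm_le_lipc_U Lfg Tfg).
Qed.

Lemma isometric_injective : Top_isometric -> Top_injective.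
Proof.
move=> iso f g Lf Lg Tfg; rewrite -iso //.
have ratios0 r : (exists x y, bdd_family d z x /\ bdd_family d z y /\ dU U d x y <> 0 /\
    r = `|Top U f x - Top U g x - (Top U f y - Top U g y)| / dU U d x y) -> r = 0.
  by move=> [x [y [bx [by_ [_ ->]]]]]; rewrite !Tfg // !subrr normr0 mul0r.
by apply/le_anti; rewrite sup_le_ge0 ?sup_ge0 // => r /ratios0 ->.
Qed.

Lemma Top_injective_norm0 (f : I -> M -> R) : Top_injective -> bdd_Lip0_family d z f ->
  (forall x, bdd_family d z x -> is_ulim U (fun i => f i (x i)) 0) ->
  ultra_norm U d f = 0.
Proof.
move=> inj Lf f0.
have L0 : bdd_Lip0_family d z (fun (_ : I) (_ : M) => 0 : R).
  by apply: (bdd_Lip0_family_uniform (lexx 0)) => // i x y; rewrite subrr normr0 mul0r.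
rewrite -(inj f _ Lf L0) => [|x bx].
  by congr ultra_norm; apply/funext => i; apply/funext => p; rewrite subr0.
by rewrite /Top (ulimE HU (f0 x bx)) (ulimE HU (is_ulim_cst HU 0)).
Qed.

Section CountablyIncomplete.
Hypothesis HCI : countably_incomplete U.

Lemma injective_uniformly_discrete : Top_injective -> uniformly_discrete d.
Proof.
move=> inj; apply: contrapT => nud.
have /choice[ab abP] k : exists ab : M * M, ab.1 <> ab.2 /\ d ab.1 ab.2 < k.+1%:R^-1.
  apply: contrapT => /forallNP nab; apply: nud; exists k.+1%:R^-1.
  split=> [|x y xy]; first by rewrite invr_gt0 ltr0Sn.
  by rewrite leNgt; apply/negP => lt; apply: (nab (x, y)).
have [n nU] := countably_incomplete_rank HU HCI.
pose a i := (ab (n i)).1; pose b i := (ab (n i)).2; pose eps i := d (a i) (b i).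
pose f i := trunc_dist (a i) (eps i).
have Lf : bdd_Lip0_family d z f.
  apply: (bdd_Lip0_family_uniform ler01) => i.
    exact: trunc_distz.
  exact: trunc_dist_lipschitz.
have : 1 <= ultra_norm U d f.
  apply: (ultra_norm_ge Lf) => i.
  have ba : b i <> a i by move/esym; exact: (proj1 (abP (n i))).
  apply: le_trans (ratio_le_lipc (trunc_dist_lipschitz (a i) (eps i)) ba).
  rewrite /f /trunc_dist metricxx (metricC (b i)) -/(eps i) minxx.
  rewrite (min_l (metric_ge0 _ _)) sub0r opprK subrK ger0_norm ?metric_ge0 //.
  by rewrite divff // gt_eqF // metric_gt0 //; apply: (proj1 (abP (n i))).
rewrite Top_injective_norm0 //; first by rewrite ler10.
move=> x _; apply: (is_ulim0_rank HU nU) => e e0.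
exists (Num.Def.archi_bound e^-1) => i ni.
apply: le_lt_trans (trunc_dist_bound (a i) (x i) (metric_ge0 (a i) (b i))) _.
apply: lt_trans (proj2 (abP (n i))) _.
rewrite invf_plt ?posrE ?ltr0Sn //; apply: lt_le_trans (archi_boundP _) _.
  by rewrite invr_ge0 ltW.
by rewrite ler_nat; exact: leqW.
Qed.

Lemma injective_bounded : Top_injective -> bounded_space d z.
Proof.
move=> inj; apply: contrapT => nbd.
have /choice[c cP] k : exists c, 2 * k%:R + 1 < d c z.
  apply: contrapT => /forallNP nc; apply: nbd; exists (2 * k%:R + 1) => c.
  by rewrite leNgt; apply/negP; exact: nc.
have [n nU] := countably_incomplete_rank HU HCI.
(* f i p = max(0, d p z - n i) *)
pose f i p := d p z - trunc_dist z (n i)%:R p.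
have fz i : f i z = 0 by rewrite /f metricxx trunc_distz subrr.
have fL i : lipschitz_with (f i) (1 + 1).
  exact: lipschitz_withB (lipschitz_dist z) (trunc_dist_lipschitz z _).
have Lf := bdd_Lip0_family_uniform (addr_ge0 ler01 ler01) fz fL.
have f_small i p : d p z <= (n i)%:R -> f i p = 0.
  move=> pn; rewrite /f /trunc_dist metricxx (min_l pn) (min_l (ler0n _ _)).
  by rewrite subr0 subrr.
have f_large i p : (n i)%:R <= d p z -> f i p = d p z - (n i)%:R.
  by move=> np; rewrite /f /trunc_dist metricxx (min_r np) (min_l (ler0n _ _)) subr0.
have : 2^-1 <= ultra_norm U d f.
  apply: (ultra_norm_ge Lf) => i.
  have n_ge0 : 0 <= (n i)%:R :> R := ler0n _ _.
  have cz_gt : 2 * (n i)%:R + 1 < d (c (n i)) z := cP (n i).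
  have cz : c (n i) <> z by move=> cz; move: cz_gt; rewrite cz metricxx; lra.
  apply: le_trans (ratio_le_lipc (fL i) cz).
  rewrite fz subr0 f_large; last by lra.
  by rewrite ger0_norm ?ler_pdivlMr; lra.
rewrite Top_injective_norm0 //; first by lra.
move=> x [C xC]; apply: (is_ulim0_rank HU nU) => e e0.
exists (Num.Def.archi_bound `|C|) => i ni; rewrite f_small ?normr0 //.
have := archi_boundP (normr_ge0 C); have := ler_norm C; have := xC i.
have : (Num.Def.archi_bound `|C|)%:R <= (n i)%:R :> R by rewrite ler_nat.
lra.
Qed.

End CountablyIncomplete.
End Ultrapower.
End Lipschitz.

Theorem proposition3p2 (R : realType) (M : Type) (d : M -> M -> R) (z : M)
    (I : Type) (U : set (set I)) :
  is_metric d -> is_ultrafilter U -> countably_incomplete U ->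
  let T := Top U in
  (* (i) <-> (ii) *)
  ((uniformly_discrete d /\ bounded_space d z) <->
   (forall f g : I -> M -> R, bdd_Lip0_family d z f -> bdd_Lip0_family d z g ->
      (forall x, bdd_family d z x -> T f x = T g x) ->
      ultra_norm U d (fun i p => f i p - g i p) = 0)) /\
  (* (ii) <-> (iii) *)
  ((forall f g : I -> M -> R, bdd_Lip0_family d z f -> bdd_Lip0_family d z g ->
      (forall x, bdd_family d z x -> T f x = T g x) ->
      ultra_norm U d (fun i p => f i p - g i p) = 0) <->
   (forall f g : I -> M -> R, bdd_Lip0_family d z f -> bdd_Lip0_family d z g ->
      lipc_U U d z (fun x => T f x - T g x) =
      ultra_norm U d (fun i p => f i p - g i p))).
Proof.
move=> Hd HU HCI T.
have i_iii : uniformly_discrete d /\ bounded_space d z -> Top_isometric d z U.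
  by case; exact: uniformly_discrete_bounded_isometric.
have ii_i : Top_injective d z U -> uniformly_discrete d /\ bounded_space d z.
  move=> inj; split; first exact: injective_uniformly_discrete inj.
  exact: injective_bounded inj.
have iii_ii : Top_isometric d z U -> Top_injective d z U by exact: isometric_injective.
split; split.
- by move=> /i_iii/iii_ii.
- exact: ii_i.
- by move=> /ii_i/i_iii.
- exact: iii_ii.
Qed.
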